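(* Let $T=2$, $d=1$. On a probability space $(\Omega,\mathcal F,\mathbb P)$ let $X,\varepsilon_1,\varepsilon_2$ be independent, with $X$ standard Gaussian, $\mathbb P(\varepsilon_1=-1/2)=\mathbb P(\varepsilon_1=4)=1/2$, $\mathbb P(\varepsilon_2=-1/2)=\mathbb P(\varepsilon_2=1/2)=1/2$. Let $\mathcal F_0$ be the $\sigma$-algebra of $\mathbb P$-null sets (and their complements), $\mathcal F_1=\mathcal F_0\vee\sigma(X,\varepsilon_1)$, $\mathcal F_2=\mathcal F_1\vee\sigma(\varepsilon_2)$. Let $\mathscr S=\{S^*,\tilde S,\bar S\}$ be real-valued adapted processes with increments $\Delta S^*_1=\varepsilon_1$, $\Delta S^*_2=\varepsilon_2$; $\Delta\tilde S_1=X$, $\Delta\tilde S_2=3-X$; $\Delta\bar S_1=3$, $\Delta\bar S_2=0$. Let $U(x)=\min\{\sqrt x,2\}$ for $x\ge0$ and $U(x)=-\infty$ for $x<0$, and $w_0=1$. Then $S^*\in\mathscr S^*$, and $$u(1):=\sup_{\phi\in\mathcal A(1)}\inf_{S\in\mathscr S}\mathbb E[U(W^S_2(1,\phi))]\le1<\tilde u(1):=\sup_{\phi\in\tilde{\mathcal A}(1)}\inf_{S\in\mathscr S}\mathbb E[U(W^S_2(1,\phi))],$$ where $\mathcal A(1)=\bigcap_{S\in\mathscr S}\{\phi:W^S_t(1,\phi)\ge0\text{ a.s. for }t=0,1,2\}$ and $\tilde{\mathcal A}(1)=\bigcap_{S\in\mathscr S}\{\phi:W^S_2(1,\phi)\ge0\text{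 a.s.}\}$.
   Context: Strategies are $\phi=(\phi_1,\phi_2)$ with $\phi_1$ $\mathcal F_0$-measurable (a.s. constant) real and $\phi_2$ an $\mathcal F_1$-measurable real random variable; $W^S_t(w,\phi)=w+\sum_{s=1}^t\phi_s\Delta S_s$. For a process $S$, $D_t^S(\omega)$ is the smallest affine subspace of $\mathbb R$ containing the support of the regular conditional distribution of $\Delta S_t$ given $\mathcal F_{t-1}$ at $\omega$. NA($S$): for every strategy $\phi$, $W_T^S(0,\phi)\ge0$ a.s. implies $W_T^S(0,\phi)=0$ a.s. $\mathscr S^*$ is the set of $S^*\in\mathscr S$ with NA($S^*$) and $D_t^S\subseteq D_t^{S^*}$ a.s. for all $S\in\mathscr S$ and $t\in\{1,2\}$. *)

From HB Require Import structures.
From mathcomp Require Import all_boot all_order all_algebra.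
From mathcomp Require Import all_classical all_reals all_analysis.
From mathcomp Require Import measurable_realfun normal_distribution.
Set Implicit Arguments. Unset Strict Implicit. Unset Printing Implicit Defensive.
Import Order.TTheory GRing.Theory Num.Theory.
Import numFieldNormedType.Exports.
Local Open Scope classical_set_scope.
Local Open Scope ring_scope.

Definition sigma_gen (T : Type) (G : set (set T)) : set (set T) := <<s G >>.

Definition preimages (T : Type) (d' : measure_display) (U : measurableType d')
  (f : T -> U) : set (set T) := [set f @^-1` B | B in measurable].

Definition measurable_wrt (T : Type) (d' : measure_display) (U : measurableType d')
  (G : set (set T)) (f : T -> U) : Prop :=
  forall B : set U, measurable B -> G (f @^-1` B).

Definition null_sigma (d : measure_display) (T : measurableType d) (R : realType)
  (P : probability T R) : set (set T) :=
  [set A | measurable A /\ (P A = 0%E \/ P (~` A) = 0%E)].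

Definition filt1 (d : measure_display) (T : measurableType d) (R : realType)
  (P : probability T R) (X e1 : T -> R) : set (set T) :=
  sigma_gen (null_sigma P `|` preimages X `|` preimages e1).

Definition filt2 (d : measure_display) (T : measurableType d) (R : realType)
  (P : probability T R) (X e1 e2 : T -> R) : set (set T) :=
  sigma_gen (filt1 P X e1 `|` preimages e2).

Definition indep3 (d : measure_display) (T : measurableType d) (R : realType)
  (P : probability T R) (X Y Z : T -> R) : Prop :=
  forall A B C : set R, measurable A -> measurable B -> measurable C ->
    P (X @^-1` A `&` Y @^-1` B `&` Z @^-1` C) =
    (P (X @^-1` A) * P (Y @^-1` B) * P (Z @^-1` C))%E.

(* A real process S = (S_0, S_1, S_2) is represented by its increments
   (Delta S_1, Delta S_2); the wealth only depends on the increments. *)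
Definition process (T : Type) (R : realType) := ((T -> R) * (T -> R))%type.

Definition strat (T : Type) (R : realType) := (R * (T -> R))%type.

Definition is_strategy (T : Type) (R : realType) (F1 : set (set T))
  (phi : strat T R) : Prop := measurable_wrt F1 phi.2.

Definition wealth (T : Type) (R : realType) (t : nat) (w : R) (phi : strat T R)
  (S : process T R) : T -> R :=
  fun om => w + (if (1 <= t)%N then phi.1 * S.1 om else 0)
              + (if (2 <= t)%N then phi.2 om * S.2 om else 0).

Definition NA (d : measure_display) (T : measurableType d) (R : realType)
  (P : probability T R) (F1 : set (set T)) (S : process T R) : Prop :=
  forall phi : strat T R, is_strategy F1 phi ->
    {ae P, forall om, 0 <= wealth 2 0 phi S om} ->
    {ae P, forall om, wealth 2 0 phi S om = 0}.

Definition is_rcd (d : measure_display) (T : measurableType d) (R : realType)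
  (P : probability T R) (G : set (set T)) (Y : T -> R)
  (kappa : T -> probability R R) : Prop :=
  (forall B : set R, measurable B -> measurable_wrt G (fun om => kappa om B : \bar R)) /\
  (forall (A : set T) (B : set R), G A -> measurable B ->
     (\int[P]_(om in A) kappa om B)%E = P (A `&` Y @^-1` B)).

Definition msupport (R : realType) (mu : set R -> \bar R) : set R :=
  [set x | forall e : R, 0 < e -> (0 < mu (ball x e))%E].

Definition affine_set (R : realType) (A : set R) : Prop :=
  forall x y l : R, A x -> A y -> A (l * x + (1 - l) * y).

Definition affine_hull (R : realType) (S : set R) : set R :=
  [set x | forall A, affine_set A -> S `<=` A -> A x].

Definition Dset (T : Type) (R : realType) (kappa : T -> probability R R) (om : T)
  : set R := affine_hull (msupport (kappa om)).

(* D_t^S \subseteq D_t^{S'} a.s., for t in {1,2}, G_{t-1} the conditioning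
   sigma-algebra and Y, Y' the increments Delta S_t, Delta S'_t *)
Definition D_incl (d : measure_display) (T : measurableType d) (R : realType)
  (P : probability T R) (G : set (set T)) (Y Y' : T -> R) : Prop :=
  forall kappa kappa' : T -> probability R R,
    is_rcd P G Y kappa -> is_rcd P G Y' kappa' ->
    {ae P, forall om, Dset kappa om `<=` Dset kappa' om}.

Definition in_Sstar (d : measure_display) (T : measurableType d) (R : realType)
  (P : probability T R) (F0 F1 : set (set T)) (SS : set (process T R))
  (Sst : process T R) : Prop :=
  SS Sst /\ NA P F1 Sst /\
  (forall S, SS S -> D_incl P F0 S.1 Sst.1 /\ D_incl P F1 S.2 Sst.2).

Definition Uutil (R : realType) (x : R) : \bar R :=
  if 0 <= x then (Num.min (Num.sqrt x) 2)%:E else -oo%E.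

Definition exp_util (d : measure_display) (T : measurableType d) (R : realType)
  (P : probability T R) (w : R) (phi : strat T R) (S : process T R) : \bar R :=
  (\int[P]_om Uutil (wealth 2 w phi S om))%E.

Definition adm (d : measure_display) (T : measurableType d) (R : realType)
  (P : probability T R) (F1 : set (set T)) (SS : set (process T R)) (w : R)
  : set (strat T R) :=
  [set phi | is_strategy F1 phi /\
     forall S, SS S -> forall t : nat, (t <= 2)%N ->
       {ae P, forall om, 0 <= wealth t w phi S om}].

Definition adm_tilde (d : measure_display) (T : measurableType d) (R : realType)
  (P : probability T R) (F1 : set (set T)) (SS : set (process T R)) (w : R)
  : set (strat T R) :=
  [set phi | is_strategy F1 phi /\
     forall S, SS S -> {ae P, forall om, 0 <= wealth 2 w phi S om}].

Definition robust_value (d : measure_display) (T : measurableType d) (R : realType)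
  (P : probability T R) (SS : set (process T R)) (w : R) (Adm : set (strat T R))
  : \bar R :=
  ereal_sup [set ereal_inf [set exp_util P w phi S | S in SS] | phi in Adm].

From HB Require Import structures.
From mathcomp Require Import all_boot all_order all_algebra.
From mathcomp Require Import all_classical all_reals all_analysis.
From mathcomp Require Import measurable_realfun normal_distribution.
From mathcomp Require Import ring lra.
Set Implicit Arguments. Unset Strict Implicit. Unset Printing Implicit Defensive.
Import Order.TTheory GRing.Theory Num.Theory.
Import numFieldNormedType.Exports.
Local Open Scope classical_set_scope.
Local Open Scope ring_scope.

(* Under F_0, and under F_1 by a pi-lambda argument, the increments eps_1 and
   eps_2 are independent of the conditioning sigma-algebra, so a regular
   conditional law of each charges both of its atoms almost surely and its
   affine hull is all of R; this gives D_t^S <= D_t^{S^*}.  NA holds for S^*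
   because eps_2 = +-1/2 independently of F_1 forces |phi_2| <= 2 phi_1 eps_1,
   while eps_1 takes a negative and a positive value, so phi_1 = 0 = phi_2.
   For u(1) <= 1: admissibility at t = 1 against S~ means 1 + phi_1 X >= 0 a.s.
   for a Gaussian X, hence phi_1 = 0, and against S- the wealth is then 1.
   For u~(1) > 1: phi = (1, 1) only needs W_2 >= 0; it yields wealth 4 under S~
   and S-, and expected utility at least 2 P(eps_1 = 4) + P(eps_1 = -1/2,
   eps_2 = 1/2) = 5/4 under S^*. *)

Lemma measurable_preimageT (d' d'' : measure_display) (T : measurableType d')
    (U : measurableType d'') (f : T -> U) (B : set U) :
  measurable_fun setT f -> measurable B -> measurable (f @^-1` B).
Proof. by move=> mf mB; rewrite -[_ @^-1` _]setTI; exact: mf. Qed.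

Lemma measurable_wrt_g_sigmaP (d' : measure_display) (T : pointedType)
    (U : measurableType d') (G : set (set T)) (f : T -> U) :
  measurable_wrt <<s G >> f <-> measurable_fun [set: g_sigma_algebraType G] f.
Proof.
by split=> mf B mB; [rewrite setTI; exact: mf|have := mf measurableT B mB; rewrite setTI].
Qed.

Section probability_facts.
Local Open Scope ereal_scope.
Context (d : measure_display) (T : measurableType d) (R : realType)
  (P : probability T R).

(* Stated for [P] itself, not for the underlying measure, so that hypotheses
   about [P] and [probability_setT] still rewrite afterwards. *)
Lemma integral_cst_probability (D : set T) (r : \bar R) : measurable D ->
  \int[P]_(x in D) cst r x = r * P D.
Proof. by move=> mD; rewrite integral_cst. Qed.

Lemma ae_exists_in (Q : T -> Prop) (A : set T) : measurable A -> 0 < P A ->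
  {ae P, forall x, Q x} -> exists2 x, A x & Q x.
Proof.
move=> mA PA [N [mN PN notQN]]; apply: contrapT => noA.
have : P A <= P N.
  by apply: le_measure; rewrite ?inE // => x Ax; apply: notQN => Qx; apply: noA; exists x.
by rewrite PN leNgt PA.
Qed.

Lemma null_sigma_indep (A E : set T) : null_sigma P A -> measurable E ->
  P (A `&` E) = P A * P E.
Proof.
move=> [mA [PA|PA]] mE.
  by rewrite PA mul0e; apply/eqP; rewrite -measure_le0 -PA measureIl.
have PA1 : P A = 1 by rewrite -[A]setCK probability_setC ?PA ?sube0 //; exact: measurableC.
rewrite PA1 mul1e [in RHS](measureDI P mE mA) setIC -[LHS]add0e; congr (_ + _).
apply/esym/eqP; rewrite -measure_le0 -PA le_measure ?inE //.
- exact: measurableD.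
- exact: measurableC.
Qed.

Lemma null_sigmaI (A B : set T) :
  null_sigma P A -> null_sigma P B -> null_sigma P (A `&` B).
Proof.
move=> [mA hA] [mB hB]; split; first exact: measurableI.
have [PA|PA] := hA.
  by left; apply/eqP; rewrite -measure_le0 -PA measureIl.
have [PB|PB] := hB.
  by left; apply/eqP; rewrite -measure_le0 -PB measureIr.
have AB : P (~` A `|` ~` B) <= P (~` A) + P (~` B).
  exact: measureU2 (measurableC mA) (measurableC mB).
by right; apply/eqP; rewrite setCI -measure_le0 (le_trans AB) // PA PB adde0.
Qed.

Lemma g_sigma_indep (G : set (set T)) (Z : set T) : measurable Z -> setI_closed G ->
  (forall A, G A -> measurable A /\ P (A `&` Z) = P A * P Z) ->
  forall A, <<s G >> A -> measurable A /\ P (A `&` Z) = P A * P Z.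
Proof.
move=> mZ GI GZ.
pose H := [set A : set T | measurable A /\ P (A `&` Z) = P A * P Z].
have fineP (A : set T) : measurable A -> P A = (fine (P A))%:E.
  by move=> mA; rewrite fineK // fin_num_measure.
suff HL : lambda_system setT H.
  by move=> A GA; exact: (lambda_system_subset GI HL GZ (fun _ _ _ _ => I) GA).
apply/dynkin_lambda_system; split.
- by split => //; rewrite setTI probability_setT mul1e.
- move=> A [mA AZ]; split; first exact: measurableC.
  rewrite probability_setC // setIC -setDE.
  have : P Z = P (Z `\` A) + P (A `&` Z) by rewrite setIC; exact: measureDI.
  rewrite AZ (fineP _ mZ) (fineP _ mA) (fineP _ (measurableD mZ mA)).
  move: (fine (P Z)) (fine (P A)) (fine (P (Z `\` A))) => z a b.
  rewrite -EFinM -EFinD -EFinB -EFinM => -[zE].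
  by congr (_%:E); rewrite mulrBl mul1r {1}zE addrK.
- move=> F tF HF; have mF n : measurable (F n) by case: (HF n).
  split; first exact: bigcup_measurable.
  rewrite setI_bigcupl !measure_bigcup //; last 2 first.
  + by move=> n _; exact: measurableI.
  + exact: trivIset_setIr.
  rewrite (fineP _ mZ) muleC -nneseriesZl; last by move=> i _; exact: measure_ge0.
  apply: eq_eseriesr => i _; case: (HF i) => _ FZ.
  by apply: (etrans FZ); rewrite -fineP // muleC.
Qed.
End probability_facts.

Section two_valued.
Local Open Scope ereal_scope.
Context (d : measure_display) (T : measurableType d) (R : realType)
  (P : probability T R) (Y : T -> R) (mY : measurable_fun setT Y).

Lemma prob_two_values (a b : R) : a != b ->
  P (Y @^-1` [set a]) = (1/2)%:E -> P (Y @^-1` [set b]) = (1/2)%:E ->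
  P (Y @^-1` [set a; b]) = 1.
Proof.
move=> ab Pa Pb; have -> : 1 = (1/2)%:E + (1/2)%:E :> \bar R.
  by rewrite -EFinD; congr (_%:E); field.
rewrite preimage_setU -{1}Pa -Pb; apply: measureU.
- exact: measurable_preimageT (measurable_set1 a).
- exact: measurable_preimageT (measurable_set1 b).
- by apply/seteqP; split => // om [/= -> Yb]; move: ab; rewrite Yb eqxx.
Qed.

Lemma ae_two_values (a b : R) : a != b ->
  P (Y @^-1` [set a]) = (1/2)%:E -> P (Y @^-1` [set b]) = (1/2)%:E ->
  {ae P, forall om, Y om = a \/ Y om = b}.
Proof.
move=> ab Pa Pb; have mYab : measurable (Y @^-1` [set a; b]).
  exact: measurable_preimageT (measurableU _ _ (measurable_set1 a) (measurable_set1 b)).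
exists (~` (Y @^-1` [set a; b])); split => //; first exact: measurableC.
by rewrite probability_setC // (prob_two_values ab Pa Pb) subee.
Qed.
End two_valued.

Section first_filtration.
Local Open Scope ereal_scope.
Context (d : measure_display) (T : measurableType d) (R : realType)
  (P : probability T R) (X e1 e2 : T -> R)
  (mX : measurable_fun setT X) (me1 : measurable_fun setT e1)
  (me2 : measurable_fun setT e2) (hind : indep3 P X e1 e2).

Lemma filt1_measurable (A : set T) : filt1 P X e1 A -> measurable A.
Proof.
apply: smallest_sub; first exact: sigma_algebra_measurable.
by move=> _ [[[mA _]|[B mB <-]]|[B mB <-]] //; exact: measurable_preimageT.
Qed.

Lemma filt1_measurable_e1 : measurable_wrt (filt1 P X e1) e1.
Proof. by move=> B mB; apply: sub_sigma_algebra; right; exists B. Qed.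

Lemma filt1_indep_e2 (B : set R) (A : set T) : measurable B -> filt1 P X e1 A ->
  P (A `&` e2 @^-1` B) = P A * P (e2 @^-1` B).
Proof.
move=> mB F1A; have mZ := measurable_preimageT me2 mB.
pose Pi := [set E : set T | exists N B1 C, [/\ null_sigma P N, measurable B1,
  measurable C & E = N `&` X @^-1` B1 `&` e1 @^-1` C]].
have PiI : setI_closed Pi.
  move=> _ _ [N [B1 [C [nN mB1 mC ->]]]] [N' [B1' [C' [nN' mB1' mC' ->]]]].
  exists (N `&` N'), (B1 `&` B1'), (C `&` C'); split.
  - exact: null_sigmaI.
  - exact: measurableI.
  - exact: measurableI.
  - by rewrite !preimage_setI; apply/seteqP; split => x /=; tauto.
have PiZ E : Pi E -> measurable E /\ P (E `&` e2 @^-1` B) = P E * P (e2 @^-1` B).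
  move: E => _ [N [B1 [C [nN mB1 mC ->]]]].
  have mXe1 : measurable (X @^-1` B1 `&` e1 @^-1` C).
    by apply: measurableI; exact: measurable_preimageT.
  rewrite -!setIA; split; first by apply: measurableI => //; case: nN.
  have mXe12 : measurable (X @^-1` B1 `&` (e1 @^-1` C `&` e2 @^-1` B)).
    by rewrite setIA; exact: measurableI.
  rewrite (null_sigma_indep nN mXe1) (null_sigma_indep nN mXe12).
  rewrite setIA hind // muleA; congr (_ * _ * _).
  have := hind mB1 mC (measurableT : measurable [set: R]).
  by rewrite preimage_setT setIT probability_setT mule1 => <-.
have F1Pi : filt1 P X e1 `<=` <<s Pi >>.
  apply: smallest_sub; first exact: smallest_sigma_algebra.
  have nT : null_sigma P setT by split => //; right; rewrite setCT measure0.
  move=> E [[nE|[B1 mB1 <-]]|[C mC <-]]; apply: sub_sigma_algebra.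
  - by exists E, setT, setT; split => //; rewrite !preimage_setT !setIT.
  - by exists setT, B1, setT; split => //; rewrite !preimage_setT setIT setTI.
  - by exists setT, setT, C; split => //; rewrite !preimage_setT !setTI.
by have [] := g_sigma_indep mZ PiI PiZ (F1Pi _ F1A).
Qed.

Lemma filt1_ae_ge0_of_e2 (f : T -> R) (v : R) : measurable_wrt (filt1 P X e1) f ->
  0 < P (e2 @^-1` [set v]) -> {ae P, forall om, e2 om = v -> (0 <= f om)%R} ->
  {ae P, forall om, (0 <= f om)%R}.
Proof.
move=> mf Pv [N [mN PN sN]].
have F1C : filt1 P X e1 (f @^-1` `]-oo, 0%R[) by apply: mf; exact: measurable_itv.
have mC := filt1_measurable F1C.
have mZ := measurable_preimageT me2 (measurable_set1 v).
exists (f @^-1` `]-oo, 0%R[); split => //; last first.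
  by move=> om /= /negP; rewrite in_itv /= -real_ltNge ?num_real.
have : P (f @^-1` `]-oo, 0%R[ `&` e2 @^-1` [set v]) = 0.
  apply/eqP; rewrite -measure_le0 -PN le_measure ?inE //; first exact: measurableI.
  move=> om [/= fneg e2v]; apply: sN => /= /(_ e2v).
  by rewrite leNgt; move: fneg; rewrite in_itv /= => ->.
by rewrite filt1_indep_e2 // => /eqP; rewrite mule_eq0 (gt_eqF Pv) orbF => /eqP.
Qed.
End first_filtration.

Lemma affine_hull_two_points (R : realType) (A : set R) (c1 c2 : R) :
  c1 != c2 -> A c1 -> A c2 -> affine_hull A = setT.
Proof.
move=> c12 Ac1 Ac2; apply/seteqP; split => // x _ B affB AB.
have c12_neq0 : c1 - c2 != 0 by rewrite subr_eq0.
have -> : x = (x - c2) / (c1 - c2) * c1 + (1 - (x - c2) / (c1 - c2)) * c2.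
  by field.
by apply: affB; apply: AB.
Qed.

Lemma msupport_balls (R : realType) (mu : probability R R) (c : R) :
  (forall n : nat, (0 < mu (ball c n.+1%:R^-1))%E) -> msupport mu c.
Proof.
move=> mu_ball e e0; apply: (lt_le_trans (mu_ball (Num.truncn e^-1))).
apply: le_measure; rewrite ?inE; try exact: measurable_ball.
apply: le_ball; rewrite -[leRHS](invrK e) lef_pV2 ?posrE ?invr_gt0 ?ltr0n //.
exact/ltW/truncnS_gt.
Qed.

Section conditional_law_of_independent.
Local Open Scope ereal_scope.
Context (d : measure_display) (T : measurableType d) (R : realType)
  (P : probability T R) (G : set (set T)) (Y : T -> R)
  (mY : measurable_fun setT Y)
  (indepG : forall Z, G Z -> measurable Z /\ forall B, measurable B ->
     P (Z `&` Y @^-1` B) = P Z * P (Y @^-1` B)).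

Lemma rcd_indep_msupport_atom (kappa : T -> probability R R) (c : R) :
  is_rcd P G Y kappa -> 0 < P (Y @^-1` [set c]) ->
  {ae P, forall om, msupport (kappa om) c}.
Proof.
move=> [mkappa kappaE] Pc.
apply: filterS (ae_foralln _) => [om|n]; first exact: msupport_balls.
set B := ball c n.+1%:R^-1.
have mB : measurable B by exact: measurable_ball.
set Z := (fun om => kappa om B) @^-1` [set 0].
have GZ : G Z by apply: mkappa => //; exact: emeasurable_set1.
have [mZ indZ] := indepG GZ.
have PB : 0 < P (Y @^-1` B).
  apply: (lt_le_trans Pc); apply: le_measure; rewrite ?inE.
  - exact: measurable_preimageT (measurable_set1 c).
  - exact: measurable_preimageT mB.
  - by move=> om /= ->; apply: ballxx; rewrite invr_gt0 ltr0n.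
(* kappa(., B) vanishes on Z in G, so P(Z) P(Y in B) = \int_Z kappa(., B) = 0. *)
have PZ : P Z = 0.
  have := kappaE Z B GZ mB; rewrite (eq_integral (fun _ => 0)) ?integral0; last first.
    by move=> om; rewrite inE.
  by rewrite indZ // => /esym/eqP; rewrite mule_eq0 (gt_eqF PB) orbF => /eqP.
exists Z; split => // om /= kappa_le0; apply: contrapT => kappa_neq0.
by apply: kappa_le0; rewrite lt_def measure_ge0 andbT; apply/eqP.
Qed.

Lemma D_incl_indep_two_atoms (c1 c2 : R) : c1 != c2 ->
  0 < P (Y @^-1` [set c1]) -> 0 < P (Y @^-1` [set c2]) ->
  forall Y' : T -> R, D_incl P G Y' Y.
Proof.
move=> c12 Pc1 Pc2 Y' kappa' kappa _ rcd_kappa.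
have := rcd_indep_msupport_atom rcd_kappa Pc1.
have := rcd_indep_msupport_atom rcd_kappa Pc2.
apply: filterS2 => om supp2 supp1 x _.
by rewrite /Dset (affine_hull_two_points c12 supp1 supp2).
Qed.
End conditional_law_of_independent.

Lemma normal_prob_unit_itv_gt0 (R : realType) (a : R) :
  (0 < normal_prob 0 1 `[a, (a + 1)%R]%classic)%E.
Proof.
pose M := (`|a| + 1) ^+ 2.
pose k := normal_peak (1 : R) * expR (- M / 2).
have k0 : 0 < k by rewrite mulr_gt0 ?expR_gt0 // normal_peak_gt0 // oner_neq0.
apply: (@lt_le_trans _ _ (\int[lebesgue_measure]_(x in `[a, (a + 1)%R]) (cst k%:E) x)%E).
  rewrite integral_cst; last exact: measurable_itv.
  have := @lebesgue_measure_itv R `[a, (a + 1)%R].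
  rewrite /= lte_fin ltrDl ltr01 -EFinD addrAC subrr add0r => ->.
  by rewrite mule1 lte_fin.
apply: ge0_le_integral => //.
- by move=> x _; rewrite lee_fin ltW.
- apply/measurable_EFinP; apply: measurable_funTS; exact: measurable_normal_pdf.
move=> x; rewrite /= in_itv /= => /andP[ax xa1].
rewrite lee_fin normal_pdfE ?oner_neq0 //.
rewrite /k ler_wpM2l ?normal_peak_ge0 // /normal_fun ler_expR subr0 expr1n.
have : x ^+ 2 <= M.
  have : - `|a| <= a by rewrite lerNl -normrN ler_norm.
  by rewrite /M; have := ler_norm a; nra.
by rewrite !mulNr lerN2 ler_pM2r ?invr_gt0 //; nra.
Qed.

Lemma measurable_Uutil (R : realType) : measurable_fun setT (@Uutil R).
Proof.
apply: measurable_fun_ifT.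
- by apply: measurable_fun_ler; [exact: measurable_cst|exact: measurable_id].
- apply/measurable_EFinP; apply: measurable_minr; last exact: measurable_cst.
  exact: continuous_measurable_fun (@sqrt_continuous R).
- exact: measurable_cst.
Qed.

Lemma Uutil1 (R : realType) : Uutil (1 : R) = 1%:E.
Proof. by rewrite /Uutil ler01 sqrtr1; congr (_%:E); apply: min_l; rewrite ler1n. Qed.

Lemma sqrtr_ge2 (R : realType) (x : R) : 4 <= x -> 2 <= Num.sqrt x.
Proof.
by move=> x4; rewrite -[leLHS](@ger0_norm _ 2) // -sqrtr_sqr ler_sqrt; lra.
Qed.

Lemma Uutil_ge4 (R : realType) (x : R) : 4 <= x -> Uutil x = 2%:E.
Proof.
move=> x4; rewrite /Uutil ifT; last by lra.
by congr (_%:E); apply: min_r; exact: sqrtr_ge2.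
Qed.

Lemma exp_util_wealth_ge4 (d : measure_display) (T : measurableType d) (R : realType)
    (P : probability T R) (w : R) (phi : strat T R) (S : process T R) :
  (forall om, 4 <= wealth 2 w phi S om) -> exp_util P w phi S = 2%:E.
Proof.
move=> W_ge4; rewrite /exp_util (eq_integral (cst 2%:E)) => [|om _].
  by rewrite integral_cst_probability // probability_setT mule1.
exact: Uutil_ge4.
Qed.

Section counterexample.
Context (d : measure_display) (T : measurableType d) (R : realType)
  (P : probability T R) (X e1 e2 : T -> R)
  (mX : measurable_fun setT X) (me1 : measurable_fun setT e1)
  (me2 : measurable_fun setT e2) (hind : indep3 P X e1 e2)
  (hX : forall A : set R, measurable A -> P (X @^-1` A) = normal_prob 0 1 A)
  (he1a : P (e1 @^-1` [set (- (1/2)) : R]) = (1/2)%:E)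
  (he1b : P (e1 @^-1` [set (4 : R)]) = (1/2)%:E)
  (he2a : P (e2 @^-1` [set (- (1/2)) : R]) = (1/2)%:E)
  (he2b : P (e2 @^-1` [set (1/2 : R)]) = (1/2)%:E).

Let Sst : process T R := (e1, e2).
Let Stl : process T R := (X, fun om => 3 - X om).
Let Sbr : process T R := (fun _ => 3, fun _ => 0).
Let SS : set (process T R) := [set Sst; Stl; Sbr].
Local Open Scope ereal_scope.

Let e1_atoms : (- (1/2) != 4 :> R)%R. Proof. by apply/eqP; lra. Qed.
Let e2_atoms : (- (1/2) != 1/2 :> R)%R. Proof. by apply/eqP; lra. Qed.

Let ae_e1_e2_atoms : {ae P, forall om,
  (e1 om = - (1/2) \/ e1 om = 4) /\ (e2 om = - (1/2) \/ e2 om = 1/2)}%R.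
Proof.
apply: filterS2 (ae_two_values me1 e1_atoms he1a he1b)
  (ae_two_values me2 e2_atoms he2a he2b) => om e1E e2E; exact: conj.
Qed.

Lemma gaussian_affine_ge0 (a : R) :
  {ae P, forall om, (0 <= 1 + a * X om)%R} -> a = 0%R.
Proof.
move=> aX_ge0.
(* Every interval [b, b + 1] has positive Gaussian mass; pick it where 1 + a X < 0. *)
have itv_hit (b : R) : exists2 om, (b <= X om <= b + 1)%R & (0 <= 1 + a * X om)%R.
  have mXb := measurable_preimageT mX (measurable_itv `[b, (b + 1)%R]).
  have PXb : 0 < P (X @^-1` `[b, (b + 1)%R]).
    by rewrite hX ?normal_prob_unit_itv_gt0 //; exact: measurable_itv.
  have [om /= Xom aXom] := ae_exists_in mXb PXb aX_ge0.
  by exists om => //; rewrite in_itv /= in Xom.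
have [a0|a0|//] := ltgtP a 0%R; exfalso.
- have [om /andP[Xom _]] := itv_hit (- a^-1 + 1)%R.
  have : (a * a^-1 = 1)%R by rewrite mulfV // lt_eqF.
  by nra.
- have [om /andP[_ Xom]] := itv_hit (- a^-1 - 2)%R.
  have : (a * a^-1 = 1)%R by rewrite mulfV // gt_eqF.
  by nra.
Qed.

Lemma NA_e1_e2 : NA P (filt1 P X e1) (e1, e2).
Proof.
move=> phi Fphi W_ge0.
have ge0_on (v : R) : P (e2 @^-1` [set v]) = (1/2)%:E ->
    {ae P, forall om, 0 <= phi.1 * e1 om + phi.2 om * v}%R.
  move=> Pv; apply: (filt1_ae_ge0_of_e2 mX me1 me2 hind (v := v)).
  - apply/measurable_wrt_g_sigmaP; apply: measurable_funD.
      apply: measurable_funM => //; apply/measurable_wrt_g_sigmaP.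
      exact: filt1_measurable_e1.
    by apply: measurable_funM => //; exact/measurable_wrt_g_sigmaP.
  - by rewrite Pv.
  - by apply: filterS W_ge0 => om; rewrite /wealth /= add0r => W e2v; rewrite -e2v.
have phi2_le : {ae P, forall om, `|phi.2 om| <= 2 * phi.1 * e1 om}%R.
  apply: filterS2 (ge0_on _ he2a) (ge0_on _ he2b) => om h1 h2.
  by rewrite ler_norml; apply/andP; split; lra.
have phi1_e1_ge0 (c : R) : P (e1 @^-1` [set c]) = (1/2)%:E -> (0 <= phi.1 * c)%R.
  move=> Pc; have mc := measurable_preimageT me1 (measurable_set1 c).
  have Pc_gt0 : 0 < P (e1 @^-1` [set c]) by rewrite Pc.
  have [om /= -> bound] := ae_exists_in mc Pc_gt0 phi2_le.
  by have := normr_ge0 (phi.2 om); lra.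
have phi1_0 : phi.1 = 0%R.
  by have := phi1_e1_ge0 _ he1a; have := phi1_e1_ge0 _ he1b; lra.
apply: filterS phi2_le => om; rewrite phi1_0 mulr0 mul0r normr_le0 => /eqP phi2_0.
by rewrite /wealth /= phi1_0 phi2_0 !mul0r !addr0.
Qed.

Lemma e1_e2_in_Sstar : in_Sstar P (null_sigma P) (filt1 P X e1) SS Sst.
Proof.
split; first by rewrite /SS /=; left; left.
split; first exact: NA_e1_e2.
move=> S _; split.
- apply: (D_incl_indep_two_atoms me1 _ e1_atoms).
  + move=> Z nZ; split; first by case: nZ.
    by move=> B mB; apply: null_sigma_indep => //; exact: measurable_preimageT.
  + by rewrite he1a lte_fin; lra.
  + by rewrite he1b lte_fin; lra.
- apply: (D_incl_indep_two_atoms me2 _ e2_atoms).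
  + move=> Z F1Z; split; first exact: (filt1_measurable mX me1 F1Z).
    by move=> B mB; exact: (filt1_indep_e2 mX me1 me2 hind mB F1Z).
  + by rewrite he2a lte_fin; lra.
  + by rewrite he2b lte_fin; lra.
Qed.

Lemma robust_value_adm_le1 : robust_value P SS 1 (adm P (filt1 P X e1) SS 1) <= 1%:E.
Proof.
apply: ge_ereal_sup => _ [[phi1 phi2] [_ adm_phi] <-].
have phi1_0 : phi1 = 0%R.
  apply: gaussian_affine_ge0; apply: filterS (adm_phi Stl _ 1%N isT) => [om|].
    by rewrite /wealth /= addr0.
  by rewrite /SS /=; left; right.
apply: le_trans (ereal_inf_lbound _) _; first by exists Sbr => //; rewrite /SS /=; right.
rewrite /exp_util (eq_integral (cst 1%E)) => [|om _].
  by rewrite integral_cst_probability // probability_setT mule1.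
by rewrite /wealth /= phi1_0 mul0r mulr0 !addr0 Uutil1.
Qed.

Let buy_and_hold : strat T R := (1%R, fun=> 1%R).

Lemma indep_e1_e2 (A B : set R) : measurable A -> measurable B ->
  P (e1 @^-1` A `&` e2 @^-1` B) = P (e1 @^-1` A) * P (e2 @^-1` B).
Proof.
move=> mA mB; have := hind (measurableT : measurable [set: R]) mA mB.
by rewrite preimage_setT setTI probability_setT mul1e.
Qed.

Lemma exp_util_buy_and_hold : (5/4)%:E <= exp_util P 1 buy_and_hold Sst.
Proof.
pose W om := (1 + e1 om + e2 om)%R.
pose h om := (Num.min (Num.sqrt (W om)) 2)%:E.
have mW : measurable_fun setT W by apply: measurable_funD => //; exact: measurable_funD.
have mh : measurable_fun setT h.
  apply/measurable_EFinP.
  apply: (measurableT_comp (f := (fun x : R => Num.sqrt x) \min cst 2%R)); last exact: mW.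
  apply: measurable_minr; last exact: measurable_cst.
  exact: continuous_measurable_fun (@sqrt_continuous R).
have h_ge0 om : 0 <= h om by rewrite lee_fin le_min sqrtr_ge0 ler0n.
have -> : exp_util P 1 buy_and_hold Sst = \int[P]_om h om.
  rewrite /exp_util (eq_integral (fun om => Uutil (W om))) => [|om _]; last first.
    by rewrite /wealth /= !mul1r.
  apply: ae_eq_integral => //; first exact: (measurableT_comp (@measurable_Uutil R) mW).
  rewrite /ae_eq; apply: filterS ae_e1_e2_atoms => om [e1E e2E] _.
  by rewrite /Uutil /h ifT // /W; case: e1E => ->; case: e2E => ->; lra.
have m1 v : measurable (e1 @^-1` [set v]) by exact: measurable_preimageT.
have m2 v : measurable (e2 @^-1` [set v]) by exact: measurable_preimageT.
(* The wealth is at least 4 on A and equals 1 on B. *)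
pose A := e1 @^-1` [set 4%R] `&` e2 @^-1` [set - (1/2); 1/2]%R.
pose B := e1 @^-1` [set - (1/2)]%R `&` e2 @^-1` [set (1/2)%R].
have mA : measurable A.
  apply: measurableI => //; apply: measurable_preimageT => //.
  exact: measurableU (measurable_set1 _) (measurable_set1 _).
have mB : measurable B by exact: measurableI.
have PA : P A = (1/2)%:E.
  rewrite indep_e1_e2 // ?(prob_two_values me2 e2_atoms he2a he2b) ?he1b ?mule1 //.
  exact: measurableU (measurable_set1 _) (measurable_set1 _).
have PB : P B = (1/4)%:E.
  by rewrite indep_e1_e2 // he1a he2b -EFinM; congr (_%:E); field.
have AB : [disjoint A & B].
  apply/eqP/seteqP; split => // om [[/= e1_4 _] [/= e1_half _]].
  by move: e1_atoms; rewrite -e1_4 -e1_half eqxx.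
apply: (@le_trans _ _ (\int[P]_(om in A `|` B) h om)); last first.
  by apply: ge0_subset_integral => //; exact: measurableU.
rewrite ge0_integral_setU //; last exact: measurable_funS mh.
apply: (@le_trans _ _ (\int[P]_(om in A) (cst 2%:E) om + \int[P]_(om in B) (cst 1) om)).
  by rewrite !integral_cst_probability // PA PB -!EFinM -EFinD lee_fin; lra.
apply: leeD; apply: ge0_le_integral => //.
- by move=> *; rewrite lee_fin.
- exact: measurable_funS mh.
- move=> om [/= e1_4 [/= e2_half|/= e2_half]]; rewrite /h /W e1_4 e2_half lee_fin le_min lexx.
    by rewrite andbT; apply: sqrtr_ge2; lra.
  by rewrite andbT; apply: sqrtr_ge2; lra.
- exact: measurable_funS mh.
- move=> om [/= e1_half e2_half]; rewrite /h /W e1_half e2_half lee_fin le_min.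
  by rewrite (_ : (1 + - (1/2) + 1/2 = 1)%R) ?sqrtr1 ?lexx ?ler1n //; lra.
Qed.

Lemma robust_value_adm_tilde_gt1 :
  1%:E < robust_value P SS 1 (adm_tilde P (filt1 P X e1) SS 1).
Proof.
have adm_bah : adm_tilde P (filt1 P X e1) SS 1 buy_and_hold.
  split; first by apply/measurable_wrt_g_sigmaP; exact: measurable_cst.
  move=> S [[->|->]|->]; last 2 first.
  - by apply: aeW => om; rewrite /wealth /=; lra.
  - by apply: aeW => om; rewrite /wealth /=; lra.
  apply: filterS ae_e1_e2_atoms => om [e1E e2E].
  by rewrite /wealth /=; case: e1E => ->; case: e2E => ->; lra.
apply: (@lt_le_trans _ _ (5/4 : R)%:E); first by rewrite lte_fin; lra.
apply: le_ereal_sup_tmp.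
exists (ereal_inf [set exp_util P 1 buy_and_hold S | S in SS]); first by exists buy_and_hold.
apply: le_ereal_inf_tmp => _ [S [[->|->]|->] <-]; first exact: exp_util_buy_and_hold.
- by rewrite exp_util_wealth_ge4 ?lee_fin => [|om]; rewrite /wealth /=; lra.
- by rewrite exp_util_wealth_ge4 ?lee_fin => [|om]; rewrite /wealth /=; lra.
Qed.

End counterexample.

Theorem mainTheorem8 (d : measure_display) (Om : measurableType d) (R : realType)
  (P : probability Om R) (X e1 e2 : Om -> R)
  (mX : measurable_fun setT X) (me1 : measurable_fun setT e1)
  (me2 : measurable_fun setT e2)
  (hind : indep3 P X e1 e2)
  (hX : forall A : set R, measurable A -> P (X @^-1` A) = normal_prob 0 1 A)
  (he1a : P (e1 @^-1` [set (- (1/2)) : R]) = (1/2)%:E)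
  (he1b : P (e1 @^-1` [set (4 : R)]) = (1/2)%:E)
  (he2a : P (e2 @^-1` [set (- (1/2)) : R]) = (1/2)%:E)
  (he2b : P (e2 @^-1` [set (1/2 : R)]) = (1/2)%:E) :
  let F0 := null_sigma P in
  let F1 := filt1 P X e1 in
  let Sst : process Om R := (e1, e2) in
  let Stl : process Om R := (X, fun om => 3 - X om) in
  let Sbr : process Om R := (fun _ => 3, fun _ => 0) in
  let SS : set (process Om R) := [set Sst; Stl; Sbr] in
  in_Sstar P F0 F1 SS Sst /\
  (robust_value P SS 1 (adm P F1 SS 1) <= 1%:E)%E /\
  (1%:E < robust_value P SS 1 (adm_tilde P F1 SS 1))%E.
Proof.
move=> F0 F1 Sst Stl Sbr SS.
split; first exact: (e1_e2_in_Sstar mX me1 me2 hind he1a he1b he2a he2b).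
split; first exact: (robust_value_adm_le1 e1 e2 mX hX).
exact: (robust_value_adm_tilde_gt1 me1 me2 hind he1a he1b he2a he2b).
Qed.
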